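(* Let $X_1,X_2$ be complex Banach spaces and $X:=X_1\times X_2$. Let $A:\mathcal{D}(A)\subset X_1\to X_1$ and $D:\mathcal{D}(D)\subset X_2\to X_2$ be closed operators, let $B:\mathcal{D}(B)\subset X_2\to X_1$ be relatively $D$-bounded and $C:\mathcal{D}(C)\subset X_1\to X_2$ be relatively $A$-bounded. Consider the operator matrix \[ \mathbb{A}=\begin{pmatrix} A & B\\ C & D\end{pmatrix}:\mathcal{D}(A)\times\mathcal{D}(D)\subset X\to X,\qquad \mathbb{A}(x_1,x_2)=(Ax_1+Bx_2,\;Cx_1+Dx_2), \] and assume that $\mathbb{A}$ is closed on $\mathcal{D}(A)\times\mathcal{D}(D)$. Then \[ \sigma(\mathbb{A})\subset \sigma(A)\cup\sigma(D)\cup\big\{\lambda\in\mathbb{C}\setminus(\sigma(A)\cup\sigma(D)) : \mathcal{R}_{21}(\lambda)\ge 1\big\}, \] where $\mathcal{R}_{21}(\lambda):=\|B(\lambda-D)^{-1}C(\lambda-A)^{-1}\|$ (operator norm on $X_1$).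
   Context: An operator $C:\mathcal{D}(C)\subset Y\to Z$ between Banach spaces is relatively $A$-bounded (for $A:\mathcal{D}(A)\subset Y\to Y$) if $\mathcal{D}(A)\subset\mathcal{D}(C)$ and there exist $\alpha,\beta\ge 0$ with $\|Cx\|\le\alpha\|x\|+\beta\|Ax\|$ for all $x\in\mathcal{D}(A)$. For a linear operator $T:\mathcal{D}(T)\subset Y\to Y$, the spectrum $\sigma(T)$ is the set of $\lambda\in\mathbb{C}$ such that $\lambda-T:\mathcal{D}(T)\to Y$ is not bijective with bounded inverse. *)

From HB Require Import structures.
From mathcomp Require Import all_boot all_order all_algebra.
From mathcomp Require Import all_classical all_reals all_analysis.
From mathcomp Require Import complex.
Import Order.TTheory GRing.Theory Num.Theory.
Import numFieldNormedType.Exports.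
Local Open Scope ring_scope.
Local Open Scope classical_set_scope.

Set Implicit Arguments.
Unset Strict Implicit.
Unset Printing Implicit Defensive.

Section Ops.
Context {R : realType}.

(* A (possibly unbounded) linear operator T : D(T) ⊂ Y -> Z is represented by
   its domain D : set Y and a function T : Y -> Z (values outside D irrelevant). *)
Definition is_subspace {Y : normedModType R[i]} (D : set Y) :=
  D 0 /\ forall (a : R[i]) x y, D x -> D y -> D (a *: x + y).

Definition is_linop {Y Z : normedModType R[i]} (D : set Y) (T : Y -> Z) :=
  is_subspace D /\
  forall (a : R[i]) x y, D x -> D y -> T (a *: x + y) = a *: T x + T y.

Definition closed_op {Y Z : normedModType R[i]} (D : set Y) (T : Y -> Z) :=
  closed [set p : Y * Z | D p.1 /\ T p.1 = p.2].

Definition rel_bounded {Y Z : normedModType R[i]}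
    (DA : set Y) (A : Y -> Y) (DC : set Y) (C : Y -> Z) :=
  DA `<=` DC /\
  exists alpha beta : R[i], 0 <= alpha /\ 0 <= beta /\
    forall x, DA x -> `|C x| <= alpha * `|x| + beta * `|A x|.

Definition is_resolvent {Y : normedModType R[i]}
    (D : set Y) (T : Y -> Y) (l : R[i]) (Rl : Y -> Y) :=
  (forall y, D (Rl y) /\ l *: Rl y - T (Rl y) = y) /\
  (forall x, D x -> Rl (l *: x - T x) = x) /\
  (exists M : R[i], forall y, `|Rl y| <= M * `|y|).

Definition spectrum {Y : normedModType R[i]} (D : set Y) (T : Y -> Y) : set R[i] :=
  [set l | ~ exists Rl, is_resolvent D T l Rl].

Definition opnorm {Y : normedModType R[i]} (S : Y -> Y) : R :=
  sup [set r : R | exists2 x : Y, `|x| <= 1 & `|S x| = (r%:C)%C].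

Definition opmatrix {X1 X2 : normedModType R[i]}
    (A : X1 -> X1) (B : X2 -> X1) (C : X1 -> X2) (D : X2 -> X2) :
    X1 * X2 -> X1 * X2 :=
  fun p => (A p.1 + B p.2, C p.1 + D p.2).

Definition opmatrix_dom {X1 X2 : normedModType R[i]}
    (DA : set X1) (DD : set X2) : set (X1 * X2) :=
  [set p | DA p.1 /\ DD p.2].

End Ops.

From HB Require Import structures.
From mathcomp Require Import all_boot all_order all_algebra.
From mathcomp Require Import all_classical all_reals all_analysis.
From mathcomp Require Import complex.
From mathcomp Require Import ring.
Import Order.TTheory GRing.Theory Num.Theory.
Import numFieldNormedType.Exports.
Local Open Scope ring_scope.
Local Open Scope classical_set_scope.

(** If [l] lies in neither [spectrum A] nor [spectrum D], relative boundedness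
    makes [B (l - D)^-1] and [C (l - A)^-1] bounded, so
    [K := B (l - D)^-1 C (l - A)^-1] is a bounded operator on [X1].  When
    [opnorm K < 1], the Picard iteration of [v |-> w + K v] converges, which makes
    [1 - K] invertible with bounded inverse [N].  Eliminating
    [x2 = (l - D)^-1 (y2 + C x1)] from [(l - M) (x1, x2) = (y1, y2)], where [M] is
    the operator matrix, leaves [(1 - K) (l - A) x1 = y1 + B (l - D)^-1 y2];
    hence [l - M] has the bounded inverse
    [x1 = (l - A)^-1 N (y1 + B (l - D)^-1 y2)], [x2 = (l - D)^-1 (y2 + C x1)]. *)

Lemma exists_expr_lt {R : realType} {c e : R[i]} :
  0 <= c -> c < 1 -> 0 < e -> exists N : nat, c ^+ N < e.
Proof.
move=> c0 c1 e0.
have [ce ee] : c = (complex.Re c)%:C%C /\ e = (complex.Re e)%:C%C.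
  by rewrite !RRe_real ?(ger0_real c0) ?(gtr0_real e0).
have c0' : 0 <= complex.Re c by rewrite -(ler0c (R := R)) -ce.
have c1' : complex.Re c < 1 by rewrite -(ltcR (R := R)) -ce.
have e0' : 0 < complex.Re e by rewrite -(ltcR (R := R)) -ee.
have := @cvg_geometric R 1 (complex.Re c); rewrite ger0_norm // => /(_ c1').
move=> /cvgr_dist_lt /(_ _ e0') [N _ HN]; exists N.
rewrite ce ee -rmorphXn ltcR; have := HN N (leqnn N).
by rewrite /= sub0r normrN /geometric mul1r ger0_norm // exprn_ge0.
Qed.

Section linear_functions.
Context {K : pzRingType} {U V : lmodType K} {f : U -> V}.
Hypothesis linf : linear f.

Lemma linear_funB x y : f (x - y) = f x - f y.
Proof. exact: zmod_morphism_linear. Qed.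

Lemma linear_fun0 : f 0 = 0.
Proof. by rewrite -(subrr 0) linear_funB subrr. Qed.

Lemma linear_funD x y : f (x + y) = f x + f y.
Proof. by rewrite -[x]scale1r linf /= !scale1r. Qed.

End linear_functions.

Section bounded_operators.
Context {R : realType}.

Definition bounded_op {Y Z : normedModType R[i]} (f : Y -> Z) :=
  exists M : R[i], 0 <= M /\ forall x, `|f x| <= M * `|x|.

Lemma bounded_opW {Y Z : normedModType R[i]} (f : Y -> Z) (M : R[i]) :
  (forall x, `|f x| <= M * `|x|) -> bounded_op f.
Proof.
move=> fM; exists `|M|; split => // x.
have Mx0 : 0 <= M * `|x| by apply: le_trans (fM x).
by rewrite -[`|x|]normr_id -normrM ger0_norm.
Qed.

Lemma bounded_op_comp {Y Z W : normedModType R[i]} {f : Z -> W} {g : Y -> Z} :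
  bounded_op f -> bounded_op g -> bounded_op (f \o g).
Proof.
move=> [M [M0 fM]] [N [N0 gN]]; exists (M * N); split; first exact: mulr_ge0.
by move=> x /=; apply: le_trans (fM _) _; rewrite -mulrA ler_wpM2l.
Qed.

Lemma bounded_opD {Y Z : normedModType R[i]} {f g : Y -> Z} :
  bounded_op f -> bounded_op g -> bounded_op (fun x => f x + g x).
Proof.
move=> [M [M0 fM]] [N [N0 gN]]; exists (M + N); split; first exact: addr_ge0.
by move=> x; apply: le_trans (ler_normD _ _) _; rewrite mulrDl lerD.
Qed.

Lemma bounded_op_pair {Y Z1 Z2 : normedModType R[i]} {f : Y -> Z1} {g : Y -> Z2} :
  bounded_op f -> bounded_op g -> bounded_op (fun x => (f x, g x)).
Proof.
move=> [M [M0 fM]] [N [N0 gN]]; exists (M + N); split; first exact: addr_ge0.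
move=> x; rewrite prod_normE comparable_ge_max /=; last exact/real_comparable/normr_real.
apply/andP; split.
  by apply: le_trans (fM _) _; rewrite ler_wpM2r // lerDl.
by apply: le_trans (gN _) _; rewrite ler_wpM2r // lerDr.
Qed.

Lemma bounded_op_fst {Y1 Y2 : normedModType R[i]} : bounded_op (@fst Y1 Y2).
Proof.
apply: (@bounded_opW _ _ _ 1) => x; rewrite mul1r prod_normE.
by rewrite comparable_le_max ?lexx //; exact/real_comparable/normr_real.
Qed.

Lemma bounded_op_snd {Y1 Y2 : normedModType R[i]} : bounded_op (@snd Y1 Y2).
Proof.
apply: (@bounded_opW _ _ _ 1) => x; rewrite mul1r prod_normE.
by rewrite comparable_le_max ?lexx ?orbT //; exact/real_comparable/normr_real.
Qed.

End bounded_operators.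

Section resolvent.
Context {R : realType} {Y : normedModType R[i]}.
Context {D : set Y} {T : Y -> Y} {l : R[i]} {Rl : Y -> Y}.
Hypothesis resT : is_resolvent D T l Rl.

Lemma resolvent_dom y : D (Rl y).
Proof. exact: (resT.1 y).1. Qed.

Lemma resolvent_apply y : T (Rl y) = l *: Rl y - y.
Proof.
by apply/eqP; rewrite eq_sym subr_eq addrC -subr_eq (resT.1 y).2.
Qed.

Lemma resolventK x : D x -> Rl (l *: x - T x) = x.
Proof. exact: resT.2.1. Qed.

Lemma resolvent_bounded : bounded_op Rl.
Proof. by have [_ [_ [M RlM]]] := resT; exact: bounded_opW RlM. Qed.

Lemma resolvent_linear : is_linop D T -> linear Rl.
Proof.
move=> [[_ Dlin] Tlin] a x y.
rewrite -[RHS]resolventK; last exact: Dlin (resolvent_dom _) (resolvent_dom _).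
rewrite Tlin; [|exact: resolvent_dom..].
rewrite !resolvent_apply; congr Rl.
rewrite scalerDr scalerBr !scalerA [l * a]mulrC opprD !opprB addrACA.
by rewrite ![_ * l *: _ + _]addrC ![l *: Rl y + _]addrC !subrK.
Qed.

Lemma rel_bounded_resolvent {Z : normedModType R[i]} {DC : set Y} {C : Y -> Z} :
  rel_bounded D T DC C -> bounded_op (C \o Rl).
Proof.
move=> [_ [a [b [a0 [b0 CaB]]]]].
have [M [M0 RlM]] := resolvent_bounded.
apply: (@bounded_opW R _ _ _ (a * M + b * (`|l| * M + 1))) => y /=.
apply: le_trans (CaB _ (resolvent_dom y)) _; rewrite resolvent_apply.
have -> : (a * M + b * (`|l| * M + 1)) * `|y| =
    a * (M * `|y|) + b * (`|l| * (M * `|y|) + `|y|) by ring.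
apply: lerD; first exact: ler_wpM2l.
apply: ler_wpM2l => //; apply: le_trans (ler_normB _ _) _.
by rewrite normrZ lerD // ler_wpM2l.
Qed.

End resolvent.

Section operator_norm.
Context {R : realType} {Y : normedModType R[i]} {K : Y -> Y}.
Hypotheses (linK : linear K) (bK : bounded_op K).

Let norms := [set r : R | exists2 x : Y, `|x| <= 1 & `|K x| = (r%:C)%C].

Let norms_ub : has_ubound norms.
Proof.
have [M [M0 KM]] := bK; exists (complex.Re M) => r [x x1 Kx].
rewrite -(lecR (R := R)) -Kx RRe_real ?ger0_real //.
by apply: le_trans (KM x) _; rewrite -[leRHS]mulr1 ler_wpM2l.
Qed.

Let norms0 : norms 0.
Proof. by exists 0; rewrite ?normr0 // (linear_fun0 linK) normr0. Qed.

Lemma opnorm_ge0 : 0 <= opnorm K.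
Proof. exact: (ub_le_sup norms_ub norms0). Qed.

Lemma ler_opnorm x : `|K x| <= ((opnorm K)%:C)%C * `|x|.
Proof.
have [->|x0] := eqVneq x 0; first by rewrite (linear_fun0 linK) !normr0 mulr0.
have xpos : 0 < `|x| by rewrite normr_gt0.
pose u := `|x|^-1 *: x.
have Ku : K u = `|x|^-1 *: K x by rewrite -[u]addr0 linK (linear_fun0 linK) addr0.
have u1 : `|u| = 1 by rewrite normrZ normfV normr_id mulVf // gt_eqF.
have : norms (complex.Re `|K u|) by exists u; rewrite ?u1 // RRe_real ?normr_real.
move=> /(ub_le_sup norms_ub); rewrite -(lecR (R := R)) RRe_real ?normr_real //.
by rewrite Ku normrZ normfV normr_id -ler_pdivrMr // mulrC.
Qed.

End operator_norm.

Section contraction.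
Context {R : realType} {X : completeNormedModType R[i]} {K : X -> X} {c : R[i]}.
Hypotheses (linK : linear K) (c0 : 0 <= c) (c1 : c < 1).
Hypothesis normK : forall x, `|K x| <= c * `|x|.

Let one_sub_c_gt0 : 0 < 1 - c. Proof. by rewrite subr_gt0. Qed.

Lemma norm_le_one_sub_contraction v : `|v| <= (1 - c)^-1 * `|v - K v|.
Proof.
rewrite ler_pdivlMl //; apply: le_trans (lerB_dist _ _).
by rewrite mulrBl mul1r lerB.
Qed.

(* [banach_fixed_point] does not apply here: it requires real scalars. *)
Section picard_iteration.
Variable w : X.

Let F v := w + K v.
Let y n := iter n F 0.
Let L := `|w| / (1 - c).

Let picard_norm n : `|y n| <= L.
Proof.
elim: n => [|n IHn]; first by rewrite normr0 divr_ge0 // ltW.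
apply: le_trans (ler_normD _ _) _; apply: le_trans (lerD (lexx _) (normK _)) _.
apply: le_trans (lerD (lexx _) (ler_wpM2l c0 IHn)) _.
suff -> : `|w| + c * L = L by [].
by rewrite /L; field; rewrite gt_eqF.
Qed.

Let picard_dist n m : `|y (n + m)%N - y n| <= c ^+ n * L.
Proof.
elim: n m => [|n IHn] m; first by rewrite add0n subr0 expr0 mul1r picard_norm.
rewrite addSn /y !iterS -/(y n) -/(y (n + m)%N) /F opprD addrACA subrr add0r.
by rewrite -(linear_funB linK); apply: le_trans (normK _) _; rewrite exprS -mulrA ler_wpM2l.
Qed.

Let picard_cvg : cvgn y.
Proof.
apply/cauchy_cvgP/cauchy_ballP => e e0; near_simpl.
have L1 : 0 < L + 1 by apply: ltr_wpDl (le_trans _ (picard_norm 0)) _.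
have eL : 0 < e / (L + 1) by rewrite divr_gt0.
have [N cN] := exists_expr_lt c0 c1 eL.
have close a b : (N <= a <= b)%N -> `|y a - y b| < e.
  move=> /andP[Na ab]; rewrite distrC -(subnKC ab).
  apply: le_lt_trans (picard_dist _ _) _.
  apply: (@le_lt_trans _ _ (c ^+ N * (L + 1))).
    apply: ler_pM; [exact: exprn_ge0|exact: le_trans (picard_norm 0)| |].
      exact: (ler_wiXn2l c0 (ltW c1) Na).
    by rewrite lerDl.
  by rewrite -ltr_pdivlMr.
exists ([set n | N <= n], [set n | N <= n])%N; first by split; exists N.
move=> [a b] [/= Na Nb]; rewrite -ball_normE /ball_ /=.
have [ab|ba] := leqP a b; first by rewrite close ?Na.
by rewrite distrC close // Nb ltnW.
Qed.

Lemma one_sub_contraction_surj : exists v, v - K v = w.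
Proof.
set p := limn y.
suff small e : 0 < e -> `|p - F p| < e.
  have [pF|] := eqVneq p (F p); first by exists p; rewrite {1}pF /F addrK.
  by rewrite -subr_eq0 -normr_gt0 => /small; rewrite ltxx.
move=> e0; have e2 : 0 < e / 2 by rewrite divr_gt0.
have [N _ yN] := proj1 (cvgrPdist_lt _ _) picard_cvg _ e2.
have -> : p - F p = (p - y N.+1) + (y N.+1 - F p) by rewrite addrA subrK.
apply: normm_lt_split; first by apply: yN => /=.
rewrite /y iterS -/(y N) /F opprD addrACA subrr add0r -(linear_funB linK).
apply: le_lt_trans (normK _) _; apply: le_lt_trans (yN N (leqnn N)).
by rewrite distrC ler_piMl // ltW.
Qed.

End picard_iteration.

Lemma one_sub_contraction_inverse : exists N : X -> X,
  [/\ forall w, N w - K (N w) = w, forall v, N (v - K v) = v & bounded_op N].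
Proof.
have [N NK] := choice one_sub_contraction_surj.
exists N; split => // [v|]; last first.
  apply: (@bounded_opW R _ _ _ (1 - c)^-1) => w.
  by rewrite -{2}[w]NK norm_le_one_sub_contraction.
set u := N (v - K v); apply/eqP; rewrite -subr_eq0 -normr_le0.
apply: le_trans (norm_le_one_sub_contraction _) _.
rewrite (linear_funB linK) !opprD !opprK addrACA NK [- v + _]addrC -[K v - v]opprB.
by rewrite subrr normr0 mulr0.
Qed.

End contraction.

Section operator_matrix.
Context {R : realType} {X1 : completeNormedModType R[i]} {X2 : normedModType R[i]}.
Context {DA : set X1} {A : X1 -> X1} {DB : set X2} {B : X2 -> X1}.
Context {DC : set X1} {C : X1 -> X2} {DD : set X2} {D : X2 -> X2}.
Hypotheses (linA : is_linop DA A) (linB : is_linop DB B).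
Hypotheses (linC : is_linop DC C) (linD : is_linop DD D).
Hypotheses (bB : rel_bounded DD D DB B) (bC : rel_bounded DA A DC C).
Context {l : R[i]} {RA : X1 -> X1} {RD : X2 -> X2}.
Hypotheses (resA : is_resolvent DA A l RA) (resD : is_resolvent DD D l RD).

Local Notation K := (B \o RD \o C \o RA).

Let BRD_dom y : DB (RD y). Proof. by apply: bB.1; exact: resolvent_dom resD y. Qed.

Let BB x y : DB x -> DB y -> B (x - y) = B x - B y.
Proof. by move=> Dx Dy; rewrite -scaleN1r addrC linB.2 ?scaleN1r // addrC. Qed.

Let BD x y : DB x -> DB y -> B (x + y) = B x + B y.
Proof. by move=> Dx Dy; rewrite -[x]scale1r linB.2 ?scale1r. Qed.

Lemma resolvent_chain_linear : linear K.
Proof.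
move=> a x y /=; rewrite (resolvent_linear resA linA) linC.2;
  try by apply: bC.1; exact: resolvent_dom resA _.
by rewrite (resolvent_linear resD linD) linB.2.
Qed.

Lemma resolvent_chain_bounded : bounded_op K.
Proof.
exact (bounded_op_comp (rel_bounded_resolvent resD bB) (rel_bounded_resolvent resA bC)).
Qed.

Section inverse.
Variable N : X1 -> X1.
Hypotheses (NK : forall w, N w - K (N w) = w) (KN : forall v, N (v - K v) = v).
Hypothesis bN : bounded_op N.

Definition opmatrix_inverse (y : X1 * X2) : X1 * X2 :=
  let x1 := RA (N (y.1 + B (RD y.2))) in (x1, RD (y.2 + C x1)).

Lemma opmatrix_inverse_bounded : bounded_op opmatrix_inverse.
Proof.
have bRD := resolvent_bounded resD; have bBRD := rel_bounded_resolvent resD bB.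
have bCRA := rel_bounded_resolvent resA bC.
have bu : bounded_op (N \o fun y : X1 * X2 => y.1 + B (RD y.2)).
  exact: bounded_op_comp bN (bounded_opD bounded_op_fst (bounded_op_comp bBRD bounded_op_snd)).
exact: bounded_op_pair (bounded_op_comp (resolvent_bounded resA) bu)
  (bounded_op_comp bRD (bounded_opD bounded_op_snd (bounded_op_comp bCRA bu))).
Qed.

Lemma opmatrix_is_resolvent :
  is_resolvent (opmatrix_dom DA DD) (opmatrix A B C D) l opmatrix_inverse.
Proof.
have RDD := linear_funD (resolvent_linear resD linD).
split; [|split].
- move=> [y1 y2]; split.
    by split; [apply: (resolvent_dom resA)|apply: (resolvent_dom resD)].
  rewrite /opmatrix /opmatrix_inverse /=; set u := N _.
  congr (_, _).
    rewrite /= RDD BD // opprD addrA (resA.1 u).2 opprD addrA addrAC.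
    by have := NK (y1 + B (RD y2)); rewrite -/u /= => ->; rewrite addrK.
  by rewrite /= opprD addrA addrAC (resD.1 _).2 addrK.
- move=> [x1 x2] [/= Dx1 Dx2]; rewrite /opmatrix /opmatrix_inverse /=.
  set v := l *: x1 - A x1.
  have RAv : RA v = x1 := resolventK resA _ Dx1.
  have E2 : l *: x2 - (C x1 + D x2) = (l *: x2 - D x2) - C x1.
    by rewrite opprD addrA addrAC.
  have -> : l *: x1 - (A x1 + B x2) + B (RD (l *: x2 - (C x1 + D x2))) = v - K v.
    rewrite E2 -[RD (_ - C x1)]addr0 -(subrr (RD (C x1))) addrA -RDD subrK.
    rewrite (resolventK resD _ Dx2) BB ?BRD_dom //; last exact: bB.1.
    by rewrite opprD !addrA subrK /= RAv.
  by rewrite KN RAv E2 subrK (resolventK resD _ Dx2).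
- by have [M [_ invM]] := opmatrix_inverse_bounded; exists M.
Qed.

End inverse.

Lemma opmatrix_not_spectrum :
  opnorm K < 1 -> ~ spectrum (opmatrix_dom DA DD) (opmatrix A B C D) l.
Proof.
move=> K1 noRes; apply: noRes.
have linK := resolvent_chain_linear; have bK := resolvent_chain_bounded.
have K0 : 0 <= (opnorm K)%:C%C by rewrite ler0c (opnorm_ge0 linK bK).
have K1' : (opnorm K)%:C%C < 1 by rewrite -(ltcR (R := R)) in K1.
have [N [NK KN bN]] := one_sub_contraction_inverse linK K0 K1' (ler_opnorm linK bK).
by exists (opmatrix_inverse N); exact: opmatrix_is_resolvent.
Qed.

End operator_matrix.

Theorem theorem1p1 (R : realType)
    (X1 X2 : completeNormedModType R[i])
    (DA : set X1) (A : X1 -> X1) (DB : set X2) (B : X2 -> X1)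
    (DC : set X1) (C : X1 -> X2) (DD : set X2) (D : X2 -> X2)
    (linA : is_linop DA A) (linB : is_linop DB B)
    (linC : is_linop DC C) (linD : is_linop DD D)
    (clA : closed_op DA A) (clD : closed_op DD D)
    (bB : rel_bounded DD D DB B) (bC : rel_bounded DA A DC C)
    (clM : closed_op (opmatrix_dom DA DD) (opmatrix A B C D)) :
  forall l : R[i], spectrum (opmatrix_dom DA DD) (opmatrix A B C D) l ->
    spectrum DA A l \/ spectrum DD D l \/
    (~ spectrum DA A l /\ ~ spectrum DD D l /\
     forall RA RD, is_resolvent DA A l RA -> is_resolvent DD D l RD ->
       1 <= opnorm (B \o RD \o C \o RA)).
Proof.
move=> l spM.
have [|nA] := pselect (spectrum DA A l); first by left.
have [|nD] := pselect (spectrum DD D l); first by right; left.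
right; right; split => //; split => // RA RD resA resD.
rewrite leNgt; apply/negP => K1.
exact (opmatrix_not_spectrum linA linB linC linD bB bC resA resD K1 spM).
Qed.
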